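(* Let $w$ be an outer commutator word in $r$ variables $x_1,\ldots,x_r$, of height $h$, and let $\mathbf{N}=(N_1,\ldots,N_r)$ be a tuple of normal subgroups of a group $G$. Then there exists a series \[ [w(\mathbf{N}),w(\mathbf{N})]=V_0\le V_1\le\cdots\le V_t=w(\mathbf{N}) \] of normal subgroups of $G$ such that, for every $i=1,\ldots,t$: (1) $V_i/V_{i-1}$ is the image of an extension $v_i(\mathbf{M}_i)$ of $w(\mathbf{N})$ by outer commutators, i.e. $V_i=v_i(\mathbf{M}_i)V_{i-1}$; (2) the extended word $v_i$ depends only on $w$ (not on $G$ or $\mathbf{N}$), and $v_i$ has degree $0$ if $h=0$ and degree at most $h-1$ if $h\ge 1$; (3) the procedure constructing the outer commutator extension $\mathbf{M}_i$ from $\mathbf{N}$ depends only on $w$ (not on $G$ or $\mathbf{N}$); (4) modulo $V_{i-1}$, the word $v_i$ is linear in one component of the tuple $\mathbf{M}_i$. Furthermore, the length $t$ of the series is $1$ if $h=0$ and at most $2^h+2^{h-1}-1$ if $h\ge 1$.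
   Context: Outer commutator words are defined recursively: every single variable is an outer commutator word (of height $0$), and if $\alpha,\beta$ are outer commutator words in disjoint sets of variables then $w=[\alpha,\beta]$ is an outer commutator word, of height $1+\max\{\mathrm{ht}(\alpha),\mathrm{ht}(\beta)\}$. For a tuple $\mathbf{S}=(S_1,\ldots,S_s)$ of subsets of $G$ and a word $v$ in $s$ variables, $v\{\mathbf{S}\}$ is the set of values $v(g_1,\ldots,g_s)$ with $g_j\in S_j$ and $v(\mathbf{S})=\langle v\{\mathbf{S}\}\rangle$. Let $Y=\{y_1,y_2,\ldots\}$ be a set of variables disjoint from $\{x_1,x_2,\ldots\}$. Extended words of $w$: $w$ itself is an extended word of $w$ of degree $0$; if $v$ is an extended word of $w$ of degree $k$, then replacing an outer-commutator subword $\gamma$ of $v$ by $[\gamma,\delta]$ or $[\delta,\gamma]$, where $\delta$ is an outer commutator word in variables from $Y$ not occurring in $v$, yields an extended word of $w$ of degree $k+1$. An extended word of $w$ thus involves $x_1,\ldots,x_r$ and some variables $y_1,\ldots,y_{s-r}$. An outer commutator extension of $\mathbf{N}$ is a tuple $\mathbf{M}=(M_1,\ldots,M_s)$, $s\ge r$, where each $M_j=w_j(\mathbf{N}_j)$ for an outer commutator word $w_j$ and a tuple $\mathbf{N}_j$ all of whose components are components of $\mathbf{N}$, with $N_j$ among the components of $\mathbf{N}_j$ when $j\le r$. An extension of $w(\mathbf{N})$ by outer commutators is a subgroup $v(\mathbf{M})$ where $v$ is an extended word of $w$ and $\mathbf{M}$ is an outer commutator extension of $\mathbf{N}$, with $M_j$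 placed in the variable $x_j$ for $j\le r$ and the remaining $M_j$ in the $Y$-variables. The word $v$ is linear in the $j$-th component of $\mathbf{M}$ modulo a normal subgroup $V$ if $v(g_1,\ldots,g_jg_j',\ldots,g_s)\equiv v(g_1,\ldots,g_j,\ldots,g_s)\,v(g_1,\ldots,g_j',\ldots,g_s)\pmod V$ for all $g_k\in M_k$ and $g_j'\in M_j$. *)

From mathcomp Require Import all_boot.
Set Implicit Arguments. Unset Strict Implicit. Unset Printing Implicit Defensive.

Record group := Group {
  gcar :> Type;
  gmul : gcar -> gcar -> gcar;
  ginv : gcar -> gcar;
  gone : gcar;
  gmulA : forall x y z, gmul x (gmul y z) = gmul (gmul x y) z;
  gmul1 : forall x, gmul gone x = x;
  gmulV : forall x, gmul (ginv x) x = gone }.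

Definition gset (G : group) := G -> Prop.

Definition subset_of (G : group) (A B : gset G) := forall x, A x -> B x.
Definition seteq (G : group) (A B : gset G) := forall x, A x <-> B x.

Definition is_subgroup (G : group) (H : gset G) :=
  [/\ H (gone G),
      (forall x y, H x -> H y -> H (gmul x y)) &
      (forall x, H x -> H (ginv x))].

Definition gconj (G : group) (x y : G) : G := gmul (ginv y) (gmul x y).

Definition is_normal (G : group) (H : gset G) :=
  is_subgroup H /\ (forall x y, H x -> H (gconj x y)).

Definition gen (G : group) (S : gset G) : gset G :=
  fun x => forall H : gset G, is_subgroup H -> subset_of S H -> H x.

Definition gcomm (G : group) (x y : G) : G :=
  gmul (ginv x) (gmul (ginv y) (gmul x y)).

Definition commsub (G : group) (A B : gset G) : gset G :=
  gen (fun z => exists a b, [/\ A a, B b & z = gcomm a b]).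

Definition setmul (G : group) (A B : gset G) : gset G :=
  fun z => exists a b, [/\ A a, B b & z = gmul a b].

Definition congr_mod (G : group) (V : gset G) (x y : G) := V (gmul x (ginv y)).

Inductive word (V : Type) := Leaf of V | Comm of word V & word V.
Arguments Leaf {V}. Arguments Comm {V}.

Fixpoint vars (V : Type) (w : word V) : seq V :=
  match w with Leaf v => [:: v] | Comm a b => vars a ++ vars b end.

Fixpoint height (V : Type) (w : word V) : nat :=
  match w with Leaf _ => 0 | Comm a b => (maxn (height a) (height b)).+1 end.

Fixpoint map_word (V W : Type) (f : V -> W) (w : word V) : word W :=
  match w with Leaf v => Leaf (f v) | Comm a b => Comm (map_word f a) (map_word f b) end.

Definition is_ocw (V : eqType) (w : word V) := uniq (vars w).

Fixpoint eval (G : group) (V : Type) (w : word V) (g : V -> G) : G :=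
  match w with Leaf v => g v | Comm a b => gcomm (eval a g) (eval b g) end.

Definition word_values (G : group) (V : eqType) (w : word V) (S : V -> gset G) : gset G :=
  fun x => exists g : V -> G, (forall k, k \in vars w -> S k (g k)) /\ x = eval w g.

Definition word_sub (G : group) (V : eqType) (w : word V) (S : V -> gset G) : gset G :=
  gen (word_values w S).

(* Variables: inl j is x_j (j-th variable of w), inr j is y_j (in Y). *)
Definition evar := (nat + nat)%type.

Inductive graft (d : word evar) : word evar -> word evar -> Prop :=
  | graft_here_r g : graft d g (Comm g d)
  | graft_here_l g : graft d g (Comm d g)
  | graft_left a a' b : graft d a a' -> graft d (Comm a b) (Comm a' b)
  | graft_right a b b' : graft d b b' -> graft d (Comm a b) (Comm a b').

Inductive ext_word (w : word nat) : word evar -> nat -> Prop :=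
  | ext_word0 : ext_word w (map_word inl w) 0
  | ext_wordS v k (d : word nat) v' :
      ext_word w v k ->
      is_ocw d ->
      (forall j, j \in vars d -> inr j \notin vars v) ->
      graft (map_word inr d) v v' ->
      ext_word w v' k.+1.

(* A recipe for one component M_j = u(N_j): an outer commutator word u in
   variables nat, and a map telling which component of N is put in each
   variable of u (so N_j = (N_{cmap k})_k). *)
Record oc_comp := OcComp { cword : word nat; cmap : nat -> nat }.

Definition comp_valid (r : nat) (c : oc_comp) :=
  is_ocw (cword c) /\ (forall k, k \in vars (cword c) -> cmap c k < r).

Definition comp_sub (G : group) (N : nat -> gset G) (c : oc_comp) : gset G :=
  word_sub (cword c) (fun k => N (cmap c k)).

(* E : evar -> oc_comp is an outer commutator extension of an r-tuple, used with
   the extended word v: every variable of v gets a valid recipe, and for the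
   x-variable x_j the component N_j occurs among the components used. *)
Definition oc_ext_valid (r : nat) (v : word evar) (E : evar -> oc_comp) :=
  forall z, z \in vars v ->
    comp_valid r (E z) /\
    (forall j, z = inl j -> exists2 k, k \in vars (cword (E z)) & cmap (E z) k = j).

Definition ext_tuple (G : group) (N : nat -> gset G) (E : evar -> oc_comp) : evar -> gset G :=
  fun z => comp_sub N (E z).

Definition linear_mod (G : group) (V : gset G) (v : word evar) (M : evar -> gset G) (l : evar) :=
  forall g : evar -> G, (forall z, z \in vars v -> M z (g z)) ->
  forall a, M l a ->
    congr_mod V (eval v (fun z => if z == l then gmul (g l) a else g z))
                (gmul (eval v g) (eval v (fun z => if z == l then a else g z))).

Record step := Step { sword : word evar; sext : evar -> oc_comp; slin : evar }.

(* For [w = [a, b]] put [A = a(N)], [B = b(N)] and [W = [A, B]], and let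
   [U_i] and [R_j] be the series already built for [a] and [b]. The series for [w] starts at
   [[W, W]], adds [[A, [B, W]]], then the terms [[U_i, B], B], and finally the terms [[A, R_j]];
   when [a] is a single variable the first two stages are replaced by the single term [[W, B]].
   The maps [X |-> [[X, B], B]] and [X |-> [A, X]] respect products, so they carry the series of
   [a] and [b] into the new one, and each new step is linear because its factor was linear and the
   previous term already contains [[[A, B], B]] and [[[W, A], B]]; both inclusions come from the
   three subgroup lemma. The length is [1 + t(a) + t(b)], within the bound [L(h)] because
   [L(h) = 2 L(h - 1) + 1]. *)

From mathcomp Require Import all_boot.
From mathcomp Require Import zify.
Set Implicit Arguments. Unset Strict Implicit. Unset Printing Implicit Defensive.

Section GroupTheory.
Variable G : group.
Implicit Types (x y z h : G) (S X Y Z H K E : gset G).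
Local Infix "\*" := gmul (at level 40, left associativity).
Local Notation "x ^-1" := (ginv x).
Local Notation "1" := (gone G).

Lemma mulgV x : x \* x^-1 = 1.
Proof.
have idem1 y : y \* y = y -> y = 1 by move=> hy; rewrite -(gmul1 y) -(gmulV y) -gmulA hy.
by apply: idem1; rewrite -gmulA (gmulA (x^-1)) gmulV gmul1.
Qed.

Lemma mulg1 x : x \* 1 = x.
Proof. by rewrite -(gmulV x) gmulA mulgV gmul1. Qed.

Lemma mulKg x y : x^-1 \* (x \* y) = y.
Proof. by rewrite gmulA gmulV gmul1. Qed.

Lemma mulKVg x y : x \* (x^-1 \* y) = y.
Proof. by rewrite gmulA mulgV gmul1. Qed.

Lemma invg_unique x y : x \* y = 1 -> x^-1 = y.
Proof. by move=> h; rewrite -(mulg1 (x^-1)) -h mulKg. Qed.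

Lemma invgK x : (x^-1)^-1 = x.
Proof. exact/invg_unique/gmulV. Qed.

Lemma invMg x y : (x \* y)^-1 = y^-1 \* x^-1.
Proof. by apply: invg_unique; rewrite -gmulA mulKVg mulgV. Qed.

Lemma invg1 : 1^-1 = 1.
Proof. exact/invg_unique/gmul1. Qed.

Ltac group_norm := rewrite /gcomm /gconj;
  repeat rewrite ?invMg ?invgK ?invg1 ?gmul1 ?mulg1 -?gmulA ?mulKg ?mulKVg ?mulgV ?gmulV.

Lemma hall_witt x y z :
  gconj (gcomm (gcomm x y^-1) z) y \*
    (gconj (gcomm (gcomm y z^-1) x) z \* gconj (gcomm (gcomm z x^-1) y) x) = 1.
Proof. by group_norm. Qed.

Lemma commMgJ x y z : gcomm (x \* y) z = gconj (gcomm x z) y \* gcomm y z.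
Proof. by group_norm. Qed.

Lemma commVg x y : gcomm x^-1 y = (gconj (gcomm x y) x^-1)^-1.
Proof. by group_norm. Qed.

Lemma commJg x y h : gcomm (gconj x h) y = gconj (gcomm x (gconj y h^-1)) h.
Proof. by group_norm. Qed.

Lemma conjRg x y h : gconj (gcomm x y) h = gcomm (gconj x h) (gconj y h).
Proof. by group_norm. Qed.

Lemma conjMg x y h : gconj (x \* y) h = gconj x h \* gconj y h.
Proof. by group_norm. Qed.

Lemma conj1g h : gconj 1 h = 1.
Proof. by group_norm. Qed.

Lemma conjVg x h : gconj x^-1 h = (gconj x h)^-1.
Proof. by group_norm. Qed.

Lemma conjgK x h : gconj (gconj x h) h^-1 = x.
Proof. by group_norm. Qed.

Lemma commgEl x y : gcomm x y = x^-1 \* gconj x y.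
Proof. by group_norm. Qed.

Lemma commgEr x y : gcomm x y = gconj y^-1 x \* y.
Proof. by group_norm. Qed.

Lemma invg_comm x y : (gcomm x y)^-1 = gcomm y x.
Proof. by group_norm. Qed.

Lemma comm1g y : gcomm 1 y = 1.
Proof. by group_norm. Qed.

Lemma comml_linear_id k x p z :
  gcomm (k \* (x \* p)) z \* (gcomm x z \* gcomm p z)^-1 =
  gconj (gcomm k z) (x \* p) \* gconj (gcomm (gcomm x z) p) (gcomm x z)^-1.
Proof. by group_norm. Qed.

Lemma commr_linear_id k x p z :
  gcomm z (k \* (x \* p)) \* (gcomm z x \* gcomm z p)^-1 =
  gcomm (gcomm z p)^-1 (gcomm z x)^-1 \*
  gconj (gcomm (gcomm z x) p \* gconj (gcomm z k) (x \* p)) (gcomm z x \* gcomm z p)^-1.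
Proof. by group_norm. Qed.

Lemma subgroup1 H : is_subgroup H -> H 1.
Proof. by case. Qed.

Lemma subgroupM H x y : is_subgroup H -> H x -> H y -> H (x \* y).
Proof. by case=> _ hM _; apply: hM. Qed.

Lemma subgroupV H x : is_subgroup H -> H x -> H x^-1.
Proof. by case=> _ _ hV; apply: hV. Qed.

Lemma normal_subgroup H : is_normal H -> is_subgroup H.
Proof. by case. Qed.

Lemma normalJ H x y : is_normal H -> H x -> H (gconj x y).
Proof. by case=> _ hJ; apply: hJ. Qed.

Lemma seteq_sub X Y : seteq X Y -> subset_of X Y.
Proof. by move=> hXY x /hXY. Qed.

Lemma seteq_sup X Y : seteq X Y -> subset_of Y X.
Proof. by move=> hXY x /hXY. Qed.

Lemma seteq_trans X Y Z : seteq X Y -> seteq Y Z -> seteq X Z.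
Proof. by move=> hXY hYZ x; split=> [/hXY/hYZ|/hYZ/hXY]. Qed.

Lemma sub_antisym X Y : subset_of X Y -> subset_of Y X -> seteq X Y.
Proof. by move=> hXY hYX x; split; [apply: hXY | apply: hYX]. Qed.

Lemma gen_subgroup S : is_subgroup (gen S).
Proof.
split.
- by move=> H hH _; apply: subgroup1.
- by move=> x y hx hy H hH hS; apply: subgroupM => //; [apply: hx | apply: hy].
- by move=> x hx H hH hS; apply: subgroupV => //; apply: hx.
Qed.

Lemma mem_gen S x : S x -> gen S x.
Proof. by move=> hx H _ hS; apply: hS. Qed.

Lemma gen_min S H : is_subgroup H -> subset_of S H -> subset_of (gen S) H.
Proof. by move=> hH hS x hx; apply: hx. Qed.

Lemma gen_normal S : (forall x y, S x -> S (gconj x y)) -> is_normal (gen S).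
Proof.
move=> hS; split; first exact: gen_subgroup.
move=> x h hx; have hgen := gen_subgroup S.
have hJ : is_subgroup (fun x => gen S (gconj x h)).
  split.
  - by rewrite /= conj1g; apply: subgroup1 hgen.
  - by move=> y z hy hz; rewrite /= conjMg; apply: subgroupM hgen _ _.
  - by move=> y hy; rewrite /= conjVg; apply: subgroupV hgen _.
by apply: (gen_min hJ) hx => y hy; apply: mem_gen; apply: hS.
Qed.

Definition relcent Y Z : gset G := fun x => forall y, Y y -> Z (gcomm x y).

Lemma relcent_subgroup Y Z : is_normal Z -> is_subgroup (relcent Y Z).
Proof.
move=> hZ; have hZs := normal_subgroup hZ; split.
- by move=> y _; rewrite comm1g; apply: subgroup1.
- move=> x1 x2 hx1 hx2 y hy; rewrite commMgJ.
  by apply: subgroupM hZs _ _; [apply: normalJ => //; apply: hx1 | apply: hx2].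
- by move=> x hx y hy; rewrite commVg; apply: subgroupV hZs _; apply: normalJ => //; apply: hx.
Qed.

Lemma relcent_normal Y Z : is_normal Y -> is_normal Z -> is_normal (relcent Y Z).
Proof.
move=> hY hZ; split; first exact: relcent_subgroup.
by move=> x h hx y hy; rewrite commJg; apply: normalJ => //; apply: hx; apply: normalJ.
Qed.

Lemma comm_gen X Y Z : is_normal Z -> (forall x y, X x -> Y y -> Z (gcomm x y)) ->
  forall x y, gen X x -> gen Y y -> Z (gcomm x y).
Proof.
move=> hZ hXY; have hZs := normal_subgroup hZ.
have commC x y : Z (gcomm y x) -> Z (gcomm x y).
  by move=> /(subgroupV hZs); rewrite invg_comm.
have hX : subset_of (gen X) (relcent Y Z).
  by apply: gen_min; [exact: relcent_subgroup | move=> x hx y hy; apply: hXY].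
have hY : subset_of (gen Y) (relcent (gen X) Z).
  by apply: gen_min; [exact: relcent_subgroup | move=> y hy x hx; apply/commC/hX].
by move=> x y hx hy; apply/commC/hY.
Qed.

Lemma mem_commsub X Y x y : X x -> Y y -> commsub X Y (gcomm x y).
Proof. by move=> hx hy; apply: mem_gen; exists x, y. Qed.

Lemma commsub_subgroup X Y : is_subgroup (commsub X Y).
Proof. exact: gen_subgroup. Qed.

Lemma commsub_min X Y H : is_subgroup H -> (forall x y, X x -> Y y -> H (gcomm x y)) ->
  subset_of (commsub X Y) H.
Proof. by move=> hH hXY; apply: gen_min => // _ [x [y [hx hy ->]]]; apply: hXY. Qed.

Lemma commsub_relcent X Y Z : is_normal Z ->
  subset_of (commsub X Y) Z <-> subset_of X (relcent Y Z).
Proof.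
move=> hZ; split=> [hXY x hx y hy | hX]; first by apply: hXY; apply: mem_commsub.
by apply: commsub_min (normal_subgroup hZ) _ => x y /hX; apply.
Qed.

Lemma commsub_normal X Y : is_normal X -> is_normal Y -> is_normal (commsub X Y).
Proof.
move=> hX hY; apply: gen_normal => _ h [x [y [hx hy ->]]].
by rewrite conjRg; exists (gconj x h), (gconj y h); split => //; apply: normalJ.
Qed.

Lemma commsub_subl X Y : is_normal X -> subset_of (commsub X Y) X.
Proof.
move=> hX; have hXs := normal_subgroup hX.
apply: commsub_min => // x y hx _; rewrite commgEl.
by apply: subgroupM; [|apply: subgroupV|apply: normalJ].
Qed.

Lemma commsub_subr X Y : is_normal Y -> subset_of (commsub X Y) Y.
Proof.
move=> hY; have hYs := normal_subgroup hY.
apply: commsub_min => // x y _ hy; rewrite commgEr.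
by apply: subgroupM => //; apply: normalJ => //; apply: subgroupV.
Qed.

Lemma commsubC X Y : subset_of (commsub X Y) (commsub Y X).
Proof.
apply: commsub_min; first exact: commsub_subgroup.
move=> x y hx hy; rewrite -invg_comm.
by apply: subgroupV (commsub_subgroup _ _) _; apply: mem_commsub.
Qed.

Lemma commsub_mono X Y X' Y' : subset_of X X' -> subset_of Y Y' ->
  subset_of (commsub X Y) (commsub X' Y').
Proof.
move=> hX hY; apply: commsub_min; first exact: commsub_subgroup.
by move=> x y hx hy; apply: mem_commsub; [apply: hX | apply: hY].
Qed.

Lemma seteq_commsub X Y X' Y' : seteq X X' -> seteq Y Y' -> seteq (commsub X Y) (commsub X' Y').
Proof.
by move=> hX hY; apply: sub_antisym; apply: commsub_mono;
  by [apply: seteq_sub | apply: seteq_sup].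
Qed.

Lemma setmul_normal X Y : is_normal X -> is_normal Y -> is_normal (setmul X Y).
Proof.
move=> hX hY; have [hXs hYs] := (normal_subgroup hX, normal_subgroup hY).
split; first split.
- by exists 1, 1; split; [apply: subgroup1 | apply: subgroup1 | rewrite gmul1].
- move=> _ _ [x1 [y1 [hx1 hy1 ->]]] [x2 [y2 [hx2 hy2 ->]]].
  exists (x1 \* x2), (gconj y1 x2 \* y2); split.
  + exact: subgroupM.
  + by apply: subgroupM => //; apply: normalJ.
  + by group_norm.
- move=> _ [x [y [hx hy ->]]]; exists x^-1, (gconj y^-1 x^-1); split.
  + exact: subgroupV.
  + by apply: normalJ => //; apply: subgroupV.
  + by group_norm.
- move=> _ h [x [y [hx hy ->]]]; exists (gconj x h), (gconj y h).
  by split; [apply: normalJ | apply: normalJ | rewrite conjMg].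
Qed.

Lemma setmul_subl X Y : is_subgroup Y -> subset_of X (setmul X Y).
Proof. by move=> hY x hx; exists x, 1; split => //; [apply: subgroup1 | rewrite mulg1]. Qed.

Lemma setmul_subr X Y : is_subgroup X -> subset_of Y (setmul X Y).
Proof. by move=> hX y hy; exists 1, y; split => //; [apply: subgroup1 | rewrite gmul1]. Qed.

Lemma setmul_min X Y H : is_subgroup H -> subset_of X H -> subset_of Y H ->
  subset_of (setmul X Y) H.
Proof. by move=> hH hX hY _ [x [y [hx hy ->]]]; apply: subgroupM; [|apply: hX|apply: hY]. Qed.

Lemma commsub_setmull_min X Y Z K : is_normal K ->
  subset_of (commsub X Z) K -> subset_of (commsub Y Z) K -> subset_of (commsub (setmul X Y) Z) K.
Proof.
move=> hK; rewrite !commsub_relcent // => hX hY.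
by apply: setmul_min => //; apply: relcent_subgroup.
Qed.

Lemma commsub_setmulr_min X Y Z K : is_normal K ->
  subset_of (commsub Z X) K -> subset_of (commsub Z Y) K -> subset_of (commsub Z (setmul X Y)) K.
Proof.
move=> hK hX hY.
have hXYZ : subset_of (commsub (setmul X Y) Z) K.
  apply: (commsub_setmull_min (X := X) (Y := Y) hK) => y /commsubC; [exact: hX | exact: hY].
by move=> x /commsubC /hXYZ.
Qed.

Lemma commsub2_setmull_min X Y Z K : is_normal Z -> is_normal K ->
  subset_of (commsub (commsub X Z) Z) K -> subset_of (commsub (commsub Y Z) Z) K ->
  subset_of (commsub (commsub (setmul X Y) Z) Z) K.
Proof.
move=> hZ hK; rewrite !(commsub_relcent _ _ hK) => hX hY.
exact: commsub_setmull_min (relcent_normal hZ hK) hX hY.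
Qed.

Lemma three_subgroup X Y Z K : is_normal
 X -> is_normal Y -> is_normal Z -> is_normal K ->
  subset_of (commsub (commsub Y Z) X) K -> subset_of (commsub (commsub Z X) Y) K ->
  subset_of (commsub (commsub X Y) Z) K.
Proof.
move=> hX hY hZ hK hYZX hZXY; have hKs := normal_subgroup hK.
have hXYZ x y z : X x -> Y y -> Z z -> K (gcomm (gcomm x y) z).
  move=> hx hy hz; have := hall_witt x y^-1 z; rewrite invgK.
  set P := gconj _ y^-1; set Q := gconj _ z; set R := gconj _ x => hPQR.
  have hxV := subgroupV (normal_subgroup hX) hx.
  have hyV := subgroupV (normal_subgroup hY) hy.
  have hzV := subgroupV (normal_subgroup hZ) hz.
  have hQ : K Q by apply: normalJ => //; apply: hYZX; do 2!apply: mem_commsub => //.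
  have hR : K R by apply: normalJ => //; apply: hZXY; do 2!apply: mem_commsub => //.
  have hP : K P.
    by rewrite -[P]invgK (invg_unique hPQR); apply: subgroupV => //; apply: subgroupM.
  by have := normalJ y^-1^-1 hK hP; rewrite /P conjgK.
rewrite commsub_relcent //; apply: commsub_min; first exact: relcent_subgroup.
by move=> x y hx hy z hz; apply: hXYZ.
Qed.

Lemma three_subgroup_A_BB X Y : is_normal X -> is_normal Y ->
  subset_of (commsub X (commsub Y Y)) (commsub (commsub X Y) Y).
Proof.
move=> hX hY x /commsubC; apply: three_subgroup => //; first by do 2?apply: commsub_normal.
by apply: commsub_mono => //; apply: commsubC.
Qed.

Lemma three_subgroup_AA_B X Y : is_normal X -> is_normal Y ->
  subset_of (commsub (commsub X X) Y) (commsub (commsub X Y) X).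
Proof.
move=> hX hY; apply: three_subgroup => //; first by do 2?apply: commsub_normal.
by apply: commsub_mono => //; apply: commsubC.
Qed.

Lemma three_subgroup_WA_B X Y W : is_normal X -> is_normal Y -> is_normal W ->
  seteq W (commsub X Y) ->
  subset_of (commsub (commsub W X) Y) (setmul (commsub X (commsub Y W)) (commsub W W)).
Proof.
move=> hX hY hW hWXY; apply: three_subgroup => //.
- by apply: setmul_normal; do 2?apply: commsub_normal.
- move=> x hx; apply: setmul_subr; first exact: commsub_subgroup.
  by move: x hx; apply: commsub_mono => //; apply: seteq_sup.
- by move=> x /commsubC; apply: setmul_subl; apply: commsub_subgroup.
Qed.

End GroupTheory.

Section WordSubgroups.
Variables (G : group) (V : eqType).
Implicit Types (w u : word V) (g : V -> G) (Q : V -> gset G).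

Lemma eq_eval w g g' : (forall k, k \in vars w -> g k = g' k) -> eval w g = eval w g'.
Proof.
elim: w => [k|a iha b ihb] /= hgg'; first by apply: hgg'; rewrite inE.
by rewrite iha ?ihb // => k hk; apply: hgg'; rewrite mem_cat hk ?orbT.
Qed.

Lemma eval_conj w g h : eval w (fun k => gconj (g k) h) = gconj (eval w g) h.
Proof. by elim: w => [k|a iha b ihb] //=; rewrite iha ihb conjRg. Qed.

Lemma mem_word_sub w Q g : (forall k, k \in vars w -> Q k (g k)) -> word_sub w Q (eval w g).
Proof. by move=> hg; apply: mem_gen; exists g. Qed.

Lemma word_sub_normal w Q : (forall k, k \in vars w -> is_normal (Q k)) ->
  is_normal (word_sub w Q).
Proof.
move=> hQ; apply: gen_normal => _ h [g [hg ->]].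
exists (fun k => gconj (g k) h); split; last by rewrite eval_conj.
by move=> k hk; apply: normalJ; [apply: hQ | apply: hg].
Qed.

Lemma word_sub_comm_sub u1 u2 Q :
  subset_of (word_sub (Comm u1 u2) Q) (commsub (word_sub u1 Q) (word_sub u2 Q)).
Proof.
apply: gen_min; first exact: commsub_subgroup.
move=> _ [g [hg ->]] /=; apply: mem_commsub; apply: mem_word_sub => k hk;
by apply: hg; rewrite /= mem_cat hk ?orbT.
Qed.

Lemma word_sub_comm u1 u2 Q :
  (forall k, k \in vars u1 -> k \notin vars u2) ->
  (forall k, k \in vars (Comm u1 u2) -> is_normal (Q k)) ->
  seteq (word_sub (Comm u1 u2) Q) (commsub (word_sub u1 Q) (word_sub u2 Q)).
Proof.
move=> hdisj hQ; apply: sub_antisym; first exact: word_sub_comm_sub.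
have hW := word_sub_normal hQ.
apply: commsub_min; first exact: normal_subgroup.
apply: comm_gen => // _ _ [g1 [hg1 ->]] [g2 [hg2 ->]].
apply: mem_gen; exists (fun k => if k \in vars u1 then g1 k else g2 k); split.
  move=> k; rewrite /= mem_cat; case: ifP => hk /= hk'; first exact: hg1.
  exact: hg2.
rewrite /=; congr gcomm; apply: eq_eval => k hk /=; first by rewrite hk.
by case: ifP => // /hdisj; rewrite hk.
Qed.

Lemma eq_word_sub w Q Q' : (forall k, k \in vars w -> seteq (Q k) (Q' k)) ->
  seteq (word_sub w Q) (word_sub w Q').
Proof.
have word_sub_mono (Q1 Q2 : V -> gset G) :
    (forall k, k \in vars w -> subset_of (Q1 k) (Q2 k)) ->
    subset_of (word_sub w Q1) (word_sub w Q2).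
  move=> hQ; apply: gen_min; first exact: gen_subgroup.
  by move=> _ [g [hg ->]]; apply: mem_word_sub => k hk; apply: hQ => //; apply: hg.
by move=> hQ; apply: sub_antisym; apply: word_sub_mono => k hk x /(hQ k hk).
Qed.

Lemma word_sub_leaf k Q : is_subgroup (Q k) -> seteq (word_sub (Leaf k) Q) (Q k).
Proof.
move=> hQ; apply: sub_antisym.
  by apply: gen_min => // _ [g [hg ->]] /=; apply: hg; rewrite inE.
by move=> x hx; apply: mem_gen; exists (fun _ => x); split => // j; rewrite inE => /eqP ->.
Qed.

End WordSubgroups.

Lemma vars_map (V W : Type) (f : V -> W) (w : word V) : vars (map_word f w) = map f (vars w).
Proof. by elim: w => [v|a iha b ihb] //=; rewrite iha ihb map_cat. Qed.

Lemma eval_map (G : group) (V W : Type) (f : V -> W) (w : word V) (g : W -> G) :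
  eval (map_word f w) g = eval w (fun v => g (f v)).
Proof. by elim: w => [v|a iha b ihb] //=; rewrite iha ihb. Qed.

Lemma word_sub_map_inl (G : group) (w : word nat) (S : evar -> gset G) :
  seteq (word_sub (map_word inl w) S) (word_sub w (fun j => S (inl j))).
Proof.
apply: sub_antisym; apply: gen_min; try exact: gen_subgroup.
  move=> _ [g [hg ->]]; rewrite eval_map; apply: mem_word_sub => k hk.
  by apply: hg; rewrite vars_map map_f.
move=> _ [g [hg ->]].
have -> : eval w g = eval (map_word inl w) (fun z : evar => if z is inl j then g j else gone G).
  by rewrite eval_map.
by apply: mem_word_sub => z; rewrite vars_map => /mapP [j hj ->]; apply: hg.
Qed.

Section Linearity.
Variable G : group.
Implicit Types (u v : word evar) (M : evar -> gset G) (l : evar) (K E : gset G).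
Local Infix "\*" := gmul (at level 40, left associativity).
Local Notation "x ^-1" := (ginv x).

Lemma linear_leaf K M l : is_subgroup K -> linear_mod K (Leaf l) M l.
Proof. by move=> hK g _ a _; rewrite /congr_mod /= eqxx mulgV; apply: subgroup1. Qed.

Lemma linear_mod_ext K v M M' l : (forall z, z \in vars v -> M z = M' z) -> l \in vars v ->
  linear_mod K v M l -> linear_mod K v M' l.
Proof.
move=> hMM' hl hlin g hg a ha; apply: hlin; last by rewrite hMM'.
by move=> z hz; rewrite hMM' //; apply: hg.
Qed.

Lemma eval_update_notin v l (g : evar -> G) y : l \notin vars v ->
  eval v (fun z => if z == l then y else g z) = eval v g.
Proof.
move=> hl; apply: eq_eval => z hz; case: eqP => // ezl.
by move: hl; rewrite -ezl hz.
Qed.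

Lemma linear_mod_split K u M l g a : linear_mod K u M l ->
  (forall z, z \in vars u -> M z (g z)) -> M l a ->
  let x := eval u g in let p := eval u (fun z => if z == l then a else g z) in
  exists2 k, K k & eval u (fun z => if z == l then g l \* a else g z) = k \* (x \* p).
Proof.
move=> hlin hg ha x p.
exists (eval u (fun z => if z == l then g l \* a else g z) \* (x \* p)^-1).
  exact: hlin.
by rewrite -gmulA gmulV mulg1.
Qed.

(* If the value of [u] is [k (x p)] with [k] in [K], the value of [[u, v]] differs from
   [[x, v] [p, v]] by conjugates of [[k, v]] and [[[x, v], p]]; similarly for [[v, u]]. *)
Lemma linear_comml K E u v M l : l \notin vars v -> is_normal E -> linear_mod K u M l ->
  subset_of (commsub K (word_sub v M)) E ->
  subset_of (commsub (commsub (word_sub u M) (word_sub v M)) (word_sub u M)) E ->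
  linear_mod E (Comm u v) M l.
Proof.
move=> hlv hE hlin hKv huvu g hg a ha.
have hgu z : z \in vars u -> M z (g z) by move=> hz; apply: hg; rewrite /= mem_cat hz.
have hz : word_sub v M (eval v g).
  by apply: mem_word_sub => z hz; apply: hg; rewrite /= mem_cat hz orbT.
rewrite /congr_mod /= !(eval_update_notin _ _ hlv).
have [k hk ->] := linear_mod_split hlin hgu ha.
rewrite comml_linear_id.
apply: subgroupM; first exact: normal_subgroup.
  by apply: normalJ => //; apply: hKv; apply: mem_commsub.
apply: normalJ => //; apply: huvu; apply: mem_commsub; first apply: mem_commsub => //.
  exact: mem_word_sub.
by apply: mem_word_sub => z hzu; case: eqP => [->|_] //; apply: hgu.
Qed.

Lemma linear_commr K E u v M l : l \notin vars v -> is_normal E -> is_normal (word_sub u M) ->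
  linear_mod K u M l ->
  subset_of (commsub (word_sub v M) K) E ->
  subset_of (commsub (commsub (word_sub v M) (word_sub u M)) (word_sub u M)) E ->
  linear_mod E (Comm v u) M l.
Proof.
move=> hlv hE hU hlin hvK hvuu g hg a ha.
have hgu z : z \in vars u -> M z (g z) by move=> hz; apply: hg; rewrite /= mem_cat hz orbT.
have hz : word_sub v M (eval v g).
  by apply: mem_word_sub => z hz; apply: hg; rewrite /= mem_cat hz.
have hx : word_sub u M (eval u g) by apply: mem_word_sub.
have hp : word_sub u M (eval u (fun z => if z == l then a else g z)).
  by apply: mem_word_sub => z hzu; case: eqP => [->|_] //; apply: hgu.
rewrite /congr_mod /= !(eval_update_notin _ _ hlv).
have [k hk ->] := linear_mod_split hlin hgu ha.
rewrite commr_linear_id.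
have hEs := normal_subgroup hE; have hUs := normal_subgroup hU.
have hvu := commsub_subgroup (word_sub v M) (word_sub u M).
apply: subgroupM => //.
  apply: hvuu; apply: mem_commsub; first by apply: (subgroupV hvu); apply: mem_commsub.
  exact: (subgroupV hUs (commsub_subr hU (mem_commsub hz hx))).
apply: normalJ => //; apply: subgroupM => //.
  by apply: hvuu; do 2?apply: mem_commsub.
by apply: normalJ => //; apply: hvK; apply: mem_commsub.
Qed.

End Linearity.

Lemma mem_map_inl (j : nat) (s : seq nat) : (inl j : evar) \in map inl s = (j \in s).
Proof. by apply/mapP/idP => [[i hi [->]] // | hj]; exists j. Qed.

Lemma inr_notin_map_inl (j : nat) (s : seq nat) : (inr j : evar) \notin map inl s.
Proof. by apply/mapP => [[]]. Qed.

Lemma inl_notin_map_inr (j : nat) (s : seq nat) : (inl j : evar) \notin map inr s.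
Proof. by apply/mapP => [[]]. Qed.

Lemma uniq_cat_notin (T : eqType) (s1 s2 : seq T) x : uniq (s1 ++ s2) -> x \in s2 -> x \notin s1.
Proof. by rewrite cat_uniq => /and3P [_ /hasPn hs12 _]; apply: hs12. Qed.

Lemma is_ocw_l (a b : word nat) : is_ocw (Comm a b) -> is_ocw a.
Proof. by rewrite /is_ocw /= cat_uniq => /and3P []. Qed.

Lemma is_ocw_r (a b : word nat) : is_ocw (Comm a b) -> is_ocw b.
Proof. by rewrite /is_ocw /= cat_uniq => /and3P []. Qed.

Definition fresh (s : seq evar) : nat :=
  foldr (fun z m => if z is inr j then maxn j.+1 m else m) 0 s.

Lemma fresh_notin s : inr (fresh s) \notin s.
Proof.
suff fresh_gt j : inr j \in s -> j < fresh s by apply/negP => /fresh_gt; rewrite ltnn.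
elim: s => [|z s ih] //=; rewrite inE => /orP [/eqP <-|/ih]; first exact: leq_maxl.
by case: z => // i hj; apply: leq_trans hj (leq_maxr _ _).
Qed.

Lemma graft_vars d v v' : graft d v v' ->
  forall z, z \in vars v' -> (z \in vars v) || (z \in vars d).
Proof.
elim=> [g|g|a a' b _ ih|a b b' _ ih] z /=; rewrite ?mem_cat.
- by case/orP => ->; rewrite ?orbT.
- by case/orP => ->; rewrite ?orbT.
- by case/orP => [/ih/orP[]->|->]; rewrite ?orbT.
- by case/orP => [->|/ih/orP[]->]; rewrite ?orbT.
Qed.

Lemma ext_word_inl_vars w v k : ext_word w v k -> forall j, inl j \in vars v -> j \in vars w.
Proof.
elim=> [|v0 k0 d v' _ ih _ _ hg] j; first by rewrite vars_map mem_map_inl.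
by move/(graft_vars hg)/orP => [/ih //|]; rewrite vars_map (negPf (inl_notin_map_inr _ _)).
Qed.

Lemma ext_word_comml a b v k : ext_word a v k -> ext_word (Comm a b) (Comm v (map_word inl b)) k.
Proof.
elim=> [|v0 k0 d v' _ ih hd hfresh hg]; first exact: ext_word0.
apply: ext_wordS ih hd _ (graft_left _ hg) => j hj /=.
by rewrite mem_cat vars_map (negPf (inr_notin_map_inl _ _)) orbF; apply: hfresh.
Qed.

Lemma ext_word_commr a b v k : ext_word b v k -> ext_word (Comm a b) (Comm (map_word inl a) v) k.
Proof.
elim=> [|v0 k0 d v' _ ih hd hfresh hg]; first exact: ext_word0.
apply: ext_wordS ih hd _ (graft_right _ hg) => j hj /=.
by rewrite mem_cat vars_map (negPf (inr_notin_map_inl _ _)); apply: hfresh.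
Qed.

Lemma ext_word_graft_leaf w v u v' y : ext_word w v u -> inr y \notin vars v ->
  graft (Leaf (inr y)) v v' -> ext_word w v' u.+1.
Proof.
by move=> hv hy; apply: (ext_wordS (d := Leaf y)) => // j; rewrite inE => /eqP ->.
Qed.

Definition word_comp (u : word nat) : oc_comp := OcComp u id.

(* The value at [inr _] is never used. *)
Definition var_comp (z : evar) : oc_comp := word_comp (Leaf (if z is inl j then j else 0)).

(* [comp_valid] and [oc_ext_valid], relative to the variables of [w] instead of [0, .., r-1]. *)
Definition comp_for (w : word nat) (z : evar) (c : oc_comp) :=
  [/\ is_ocw (cword c), forall k, k \in vars (cword c) -> cmap c k \in vars w &
      forall j, z = inl j -> exists2 k, k \in vars (cword c) & cmap c k = j].

Definition oc_ext_for (w : word nat) (v : word evar) (E : evar -> oc_comp) :=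
  forall z, z \in vars v -> comp_for w z (E z).

Lemma word_comp_for w u z : is_ocw u -> {subset vars u <= vars w} ->
  (forall j, z = inl j -> j \in vars u) -> comp_for w z (word_comp u).
Proof. by move=> hu huw hz; split=> // j /hz hj; exists j. Qed.

Lemma var_comp_for w j : j \in vars w -> comp_for w (inl j) (var_comp (inl j)).
Proof.
move=> hj; apply: word_comp_for => //= [k | j' [<-]]; last by rewrite inE.
by rewrite inE => /eqP ->.
Qed.

Lemma var_comp_for_map u w z : {subset vars u <= vars w} -> z \in vars (map_word inl u) ->
  comp_for w z (var_comp z).
Proof. by move=> huw; rewrite vars_map => /mapP [j /huw hj ->]; apply: var_comp_for. Qed.

Lemma comp_for_sub w w' z c : {subset vars w <= vars w'} -> comp_for w z c -> comp_for w' z c.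
Proof. by move=> hww' [hc hcw hz]; split=> // k /hcw; apply: hww'. Qed.

Definition leaf_step (j : nat) : step := Step (Leaf (inl j)) var_comp (inl j).

(* In paper notation, with [v] a step for [a] (resp. [b]) and [y] a new variable:
   [stepF a b] is [[a, [b, y]]] with [y := [a, b]], [stepL x b] is [[x, b]] with
   [x := [x, b]], [stepA b v] is [[[v, y], b]] with [y := b], and [stepB a v] is [[a, v]]. *)
Definition stepF (a b : word nat) : step :=
  Step (Comm (map_word inl a) (Comm (map_word inl b) (Leaf (inr 0))))
       (fun z => if z is inr _ then word_comp (Comm a b) else var_comp z) (inr 0).

Definition stepL (x : nat) (b : word nat) : step :=
  Step (Comm (Leaf (inl x)) (map_word inl b))
       (fun z => if z == inl x then word_comp (Comm (Leaf x) b) else var_comp z) (inl x).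

Definition stepA (b : word nat) (s : step) : step :=
  let y := fresh (vars (sword s)) in
  Step (Comm (Comm (sword s) (Leaf (inr y))) (map_word inl b))
       (fun z => if z \in vars (map_word inl b) then var_comp z
                 else if z == inr y then word_comp b else sext s z) (slin s).

Definition stepB (a : word nat) (s : step) : step :=
  Step (Comm (map_word inl a) (sword s))
       (fun z => if z \in vars (map_word inl a) then var_comp z else sext s z) (slin s).

Definition step_ok (w : word nat) (s : step) :=
  [/\ exists2 d, ext_word w (sword s) d & d <= (height w).-1,
      oc_ext_for w (sword s) (sext s) & slin s \in vars (sword s)].

Section StepsOfCommutator.
Variables a b : word nat.
Hypothesis ocw_ab : is_ocw (Comm a b).

Lemma vars_sub_l : {subset vars a <= vars (Comm a b)}.
Proof. by move=> k hk; rewrite /= mem_cat hk. Qed.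

Lemma vars_sub_r : {subset vars b <= vars (Comm a b)}.
Proof. by move=> k hk; rewrite /= mem_cat hk orbT. Qed.

Lemma vars_disj j : j \in vars b -> j \notin vars a.
Proof. exact: uniq_cat_notin. Qed.

Lemma oc_ext_stepF : oc_ext_for (Comm a b) (sword (stepF a b)) (sext (stepF a b)).
Proof.
move=> z; rewrite /= !mem_cat inE !vars_map => /or3P [/mapP [j hj ->]|/mapP [j hj ->]|/eqP ->].
- exact: var_comp_for (vars_sub_l hj).
- exact: var_comp_for (vars_sub_r hj).
- exact: word_comp_for.
Qed.

Lemma step_ok_stepF : 0 < height a -> step_ok (Comm a b) (stepF a b).
Proof.
move=> ha; split; [|exact: oc_ext_stepF | by rewrite /= !mem_cat inE eqxx !orbT].
exists 1; last exact: leq_trans ha (leq_maxl _ _).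
apply: ext_word_graft_leaf (ext_word0 (Comm a b)) _ (graft_right _ (graft_here_r _ _)).
by rewrite /= mem_cat !vars_map !(negPf (inr_notin_map_inl _ _)).
Qed.

Lemma stepB_notin_l s : step_ok b s -> forall z, z \in vars (sword s) ->
  z \notin vars (map_word inl a).
Proof.
case=> [[d hd _] _ _] [j|j] hz; rewrite vars_map ?(inr_notin_map_inl) // mem_map_inl.
exact/vars_disj/(ext_word_inl_vars hd).
Qed.

Lemma sext_stepB s : step_ok b s -> forall z, z \in vars (sword s) ->
  sext (stepB a s) z = sext s z.
Proof. by move=> hs z hz; rewrite /= (negPf (stepB_notin_l hs hz)). Qed.

Lemma oc_ext_stepB s : step_ok b s -> oc_ext_for (Comm a b) (sword (stepB a s)) (sext (stepB a s)).
Proof.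
move=> hs; have [_ hE _] := hs.
move=> z hz; have /orP [hza|hzs] : (z \in vars (map_word inl a)) || (z \in vars (sword s)).
  by rewrite -mem_cat.
  by rewrite /= hza; apply: var_comp_for_map vars_sub_l hza.
by rewrite sext_stepB //; apply: comp_for_sub vars_sub_r (hE _ hzs).
Qed.

Lemma step_ok_stepB s : step_ok b s -> step_ok (Comm a b) (stepB a s).
Proof.
move=> hs; have [[d hd hdb] _ hl] := hs.
split; [|exact: oc_ext_stepB | by rewrite /= mem_cat hl orbT].
by exists d; [apply: ext_word_commr | rewrite /=; lia].
Qed.

Lemma stepA_notin_r s : step_ok a s -> forall z, z \in vars (sword s) ->
  z \notin vars (map_word inl b).
Proof.
case=> [[d hd _] _ _] [j|j] hz; rewrite vars_map ?(inr_notin_map_inl) // mem_map_inl.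
by apply/negP => /vars_disj; rewrite (ext_word_inl_vars hd).
Qed.

Lemma sext_stepA s : step_ok a s -> forall z, z \in vars (sword s) ->
  sext (stepA b s) z = sext s z.
Proof.
move=> hs z hz; rewrite /= (negPf (stepA_notin_r hs hz)).
by case: eqP => // ez; have := fresh_notin (vars (sword s)); rewrite -ez hz.
Qed.

Lemma oc_ext_stepA s : step_ok a s -> oc_ext_for (Comm a b) (sword (stepA b s)) (sext (stepA b s)).
Proof.
move=> hs; have [_ hE _] := hs.
move=> z hz; have /or3P [hzs|/eqP ->|hzb] :
    [|| z \in vars (sword s), z == inr (fresh (vars (sword s))) | z \in vars (map_word inl b)].
  by move: hz; rewrite /= !mem_cat inE orbA.
- by rewrite sext_stepA //; apply: comp_for_sub vars_sub_l (hE _ hzs).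
- rewrite /= vars_map (negPf (inr_notin_map_inl _ _)) eqxx.
  exact: word_comp_for (is_ocw_r ocw_ab) vars_sub_r _.
- by rewrite /= hzb; apply: var_comp_for_map vars_sub_r hzb.
Qed.

Lemma step_ok_stepA : 0 < height a -> forall s, step_ok a s -> step_ok (Comm a b) (stepA b s).
Proof.
move=> ha s hs; have [[d hd hda] _ hl] := hs.
split; [|exact: oc_ext_stepA | by rewrite /= !mem_cat hl].
exists d.+1; last by rewrite /=; lia.
apply: ext_word_graft_leaf (ext_word_comml _ hd) _ (graft_left _ (graft_here_r _ _)).
by rewrite /= mem_cat vars_map (negPf (inr_notin_map_inl _ _)) orbF fresh_notin.
Qed.

End StepsOfCommutator.

Lemma oc_ext_stepL x b : is_ocw (Comm (Leaf x) b) ->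
  oc_ext_for (Comm (Leaf x) b) (sword (stepL x b)) (sext (stepL x b)).
Proof.
move=> ho z /=; rewrite inE; case: eqP => [-> _|_ /= hz].
  by apply: word_comp_for => // j [<-]; rewrite /= inE eqxx.
by apply: var_comp_for_map hz => k hk; rewrite /= inE hk orbT.
Qed.

Lemma step_ok_stepL x b : is_ocw (Comm (Leaf x) b) -> step_ok (Comm (Leaf x) b) (stepL x b).
Proof.
move=> ho; split; [|exact: oc_ext_stepL | by rewrite /= inE eqxx].
by exists 0; first exact: ext_word0.
Qed.

Definition step0 : step := leaf_step 0.

Definition steps_ok (w : word nat) (ss : seq step) :=
  forall i, i < size ss -> step_ok w (nth step0 ss i).

Lemma steps_ok_cons w s ss : step_ok w s -> steps_ok w ss -> steps_ok w (s :: ss).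
Proof. by move=> hs hss [|i] hi; [exact: hs | exact: hss i hi]. Qed.

Lemma steps_ok_cat w ss1 ss2 : steps_ok w ss1 -> steps_ok w ss2 -> steps_ok w (ss1 ++ ss2).
Proof.
move=> h1 h2 i; rewrite size_cat nth_cat.
case: (ltnP i (size ss1)) => [hi _|hi hi']; first exact: h1.
by apply: h2; rewrite -(ltn_add2l (size ss1)) subnKC.
Qed.

Lemma steps_ok_map w w' (f : step -> step) ss :
  (forall s, step_ok w s -> step_ok w' (f s)) -> steps_ok w ss -> steps_ok w' (map f ss).
Proof. by move=> hf hss i; rewrite size_map => hi; rewrite (nth_map step0) //; apply/hf/hss. Qed.

Section Series.
Variables (G : group) (N : nat -> gset G).
Implicit Types (D E W : gset G) (s : step) (ss : seq step).

Definition step_sub s : gset G := word_sub (sword s) (ext_tuple N (sext s)).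

Fixpoint series D ss n {struct n} : gset G :=
  if n is n'.+1 then (if ss is s :: ss' then series (setmul (step_sub s) D) ss' n' else D)
  else D.

Lemma seriesS D ss n : n < size ss ->
  series D ss n.+1 = setmul (step_sub (nth step0 ss n)) (series D ss n).
Proof. by elim: ss D n => [|s ss ih] D [|n] // hn; apply: ih. Qed.

Lemma series_cat D ss1 ss2 n :
  series D (ss1 ++ ss2) (size ss1 + n) = series (series D ss1 (size ss1)) ss2 n.
Proof. by elim: ss1 D => [|s ss1 ih] D //=; rewrite addSn /= ih. Qed.

Lemma series_catl D ss1 ss2 n : n <= size ss1 -> series D (ss1 ++ ss2) n = series D ss1 n.
Proof. by elim: ss1 D n => [|s ss1 ih] D [|n] //= hn; rewrite ih. Qed.

Lemma series_normal D ss : is_normal D ->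
  (forall i, i < size ss -> is_normal (step_sub (nth step0 ss i))) ->
  forall n, is_normal (series D ss n).
Proof.
elim: ss D => [|s ss ih] D hD hss [|n] //=.
by apply: ih => [|i hi]; [apply: setmul_normal (hss 0 _) hD | apply: (hss i.+1)].
Qed.

Lemma series_mono D ss m n : m <= n -> subset_of (series D ss m) (series D ss n).
Proof.
have series_subS k : subset_of (series D ss k) (series D ss k.+1).
  by elim: ss D k => [|s ss ih] D [|k] //=; apply: setmul_subr (gen_subgroup _).
move=> /subnK <-; elim: (n - m) => [|k ih] //= x /ih.
exact: series_subS.
Qed.

Lemma step_sub_series D ss i : i < size ss -> is_subgroup (series D ss i) ->
  subset_of (step_sub (nth step0 ss i)) (series D ss i.+1).
Proof. by move=> hi hV; rewrite seriesS //; apply: setmul_subl. Qed.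

Lemma series_sub D ss W : is_subgroup W -> subset_of D W ->
  (forall i, i < size ss -> subset_of (step_sub (nth step0 ss i)) W) ->
  forall n, subset_of (series D ss n) W.
Proof.
elim: ss D => [|s ss ih] D hW hD hss [|n] //=.
by apply: ih => // [|i hi]; [apply: setmul_min => //; apply: (hss 0) | apply: (hss i.+1)].
Qed.

Lemma series_image (phi : gset G -> gset G) D E ss1 ss2 :
  (forall X Y Z, is_normal Z -> subset_of (phi X) Z -> subset_of (phi Y) Z ->
     subset_of (phi (setmul X Y)) Z) ->
  size ss1 = size ss2 -> is_normal E ->
  (forall i, i < size ss2 -> is_normal (step_sub (nth step0 ss2 i))) ->
  (forall i, i < size ss1 ->
     subset_of (phi (step_sub (nth step0 ss1 i))) (step_sub (nth step0 ss2 i))) ->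
  subset_of (phi D) E -> forall n, subset_of (phi (series D ss1 n)) (series E ss2 n).
Proof.
move=> hphi; elim: ss1 ss2 D E => [|s1 ss1 ih] [|s2 ss2] //= D E hsz hE hss2 hss12 hDE [|n] //=.
have hE2 : is_normal (setmul (step_sub s2) E) := setmul_normal (hss2 0 isT) hE.
apply: ih => [|//|i hi|i hi|]; [by case: hsz | exact: (hss2 i.+1) | exact: (hss12 i.+1) |].
have hS2 : subset_of (step_sub s2) (setmul (step_sub s2) E).
  by move=> x; apply: setmul_subl; apply: normal_subgroup.
have hES2 : subset_of E (setmul (step_sub s2) E).
  by move=> x; apply: setmul_subr; apply: gen_subgroup.
exact: hphi _ _ _ hE2 (fun x hx => hS2 x (hss12 0 isT x hx)) (fun x hx => hES2 x (hDE x hx)).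
Qed.

Definition step_linear D s := linear_mod D (sword s) (ext_tuple N (sext s)) (slin s).

Definition linear_steps D ss :=
  forall i, i < size ss -> step_linear (series D ss i) (nth step0 ss i).

Lemma linear_steps_cons D s ss : step_linear D s ->
  linear_steps (setmul (step_sub s) D) ss -> linear_steps D (s :: ss).
Proof. by move=> hs hss [|i] hi; [exact: hs | exact: hss i hi]. Qed.

Lemma linear_steps_cat D ss1 ss2 : linear_steps D ss1 ->
  linear_steps (series D ss1 (size ss1)) ss2 -> linear_steps D (ss1 ++ ss2).
Proof.
move=> h1 h2 i; rewrite size_cat => hi12; rewrite nth_cat.
case: (ltnP i (size ss1)) => hi; first by rewrite series_catl; [apply: h1 | apply: ltnW].
have hj : i - size ss1 < size ss2 by rewrite -(ltn_add2l (size ss1)) subnKC.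
by have := h2 _ hj; rewrite -series_cat subnKC.
Qed.

End Series.

Definition series_bound (h : nat) := if h == 0 then 1 else 2 ^ h + 2 ^ h.-1 - 1.

Definition extension_steps (w : word nat) (ss : seq step) :=
  [/\ 0 < size ss, size ss <= series_bound (height w) & steps_ok w ss].

Definition linear_series (w : word nat) (ss : seq step) :=
  forall (G : group) (N : nat -> gset G), (forall j, j \in vars w -> is_normal (N j)) ->
    let W := word_sub w N in
    seteq (series N (commsub W W) ss (size ss)) W /\ linear_steps N (commsub W W) ss.

Lemma ext_tuple_normal (G : group) (N : nat -> gset G) w v E z :
  oc_ext_for w v E -> (forall j, j \in vars w -> is_normal (N j)) -> z \in vars v ->
  is_normal (ext_tuple N E z).
Proof.
move=> hE hN hz; have [_ hw _] := hE z hz.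
by apply: word_sub_normal => k hk; apply/hN/hw.
Qed.

Lemma step_sub_normal (G : group) (N : nat -> gset G) w s :
  oc_ext_for w (sword s) (sext s) -> (forall j, j \in vars w -> is_normal (N j)) ->
  is_normal (step_sub N s).
Proof. by move=> hE hN; apply: word_sub_normal => z; apply: ext_tuple_normal hE hN. Qed.

Lemma steps_ok_series_normal (G : group) (N : nat -> gset G) w D ss : is_normal D ->
  (forall j, j \in vars w -> is_normal (N j)) -> steps_ok w ss ->
  forall n, is_normal (series N D ss n).
Proof.
move=> hD hN hss; apply: series_normal hD _ => i hi.
by have [_ hext _] := hss i hi; apply: step_sub_normal hext hN.
Qed.

Lemma step_sub_word_sub (G : group) (N : nat -> gset G) w ss :
  (forall j, j \in vars w -> is_normal (N j)) -> steps_ok w ss ->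
  let W := word_sub w N in seteq (series N (commsub W W) ss (size ss)) W ->
  forall i, i < size ss -> subset_of (step_sub N (nth step0 ss i)) W.
Proof.
move=> hN hss W hend i hi x hx.
have hW : is_normal W by apply: word_sub_normal.
have hV := steps_ok_series_normal (commsub_normal hW hW) hN hss i.
apply: (seteq_sub hend); apply: (series_mono hi).
exact: (step_sub_series hi (normal_subgroup hV) hx).
Qed.

Section CommutatorSeries.
Variables (G : group) (N : nat -> gset G) (a b : word nat).
Hypothesis ocw_ab : is_ocw (Comm a b).
Hypothesis normal_N : forall j, j \in vars (Comm a b) -> is_normal (N j).
Local Notation A := (word_sub a N).
Local Notation B := (word_sub b N).
Local Notation W := (word_sub (Comm a b) N).

Lemma normal_Na j : j \in vars a -> is_normal (N j).
Proof. by move=> hj; apply: normal_N; rewrite /= mem_cat hj. Qed.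

Lemma normal_Nb j : j \in vars b -> is_normal (N j).
Proof. by move=> hj; apply: normal_N; rewrite /= mem_cat hj orbT. Qed.

Lemma normal_A : is_normal A.
Proof. exact: word_sub_normal normal_Na. Qed.

Lemma normal_B : is_normal B.
Proof. exact: word_sub_normal normal_Nb. Qed.

Lemma normal_W : is_normal W.
Proof. exact: word_sub_normal normal_N. Qed.

Lemma W_commsub : seteq W (commsub A B).
Proof.
apply: word_sub_comm normal_N => k hka; apply/negP => hkb.
by have := vars_disj ocw_ab hkb; rewrite hka.
Qed.

Lemma word_sub_map_inl_var u E : (forall j, j \in vars u -> is_normal (N j)) ->
  (forall z, z \in vars (map_word inl u) -> E z = var_comp z) ->
  seteq (word_sub (map_word inl u) (ext_tuple N E)) (word_sub u N).
Proof.
move=> hu hE; apply: seteq_trans (word_sub_map_inl _ _) _.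
apply: eq_word_sub => j hj; rewrite /ext_tuple hE; last by rewrite vars_map mem_map_inl.
exact/word_sub_leaf/normal_subgroup/hu.
Qed.

Lemma step_sub_stepF : seteq (step_sub N (stepF a b)) (commsub A (commsub B W)).
Proof.
have hM := ext_tuple_normal (oc_ext_stepF ocw_ab) normal_N.
have hE u : forall z, z \in vars (map_word inl u) -> sext (stepF a b) z = var_comp z.
  by move=> z; rewrite vars_map => /mapP [j _ ->].
apply: seteq_trans (word_sub_comm _ hM) _.
  move=> z; rewrite vars_map => /mapP [j hj ->] /=.
  rewrite mem_cat inE vars_map mem_map_inl orbF.
  by apply/negP => /(vars_disj ocw_ab); rewrite hj.
apply: seteq_commsub; first exact: word_sub_map_inl_var normal_Na (hE a).
apply: seteq_trans (word_sub_comm _ _) _.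
- by move=> z; rewrite vars_map inE => /mapP [j _ ->].
- by move=> z hz; apply: hM; rewrite /= mem_cat hz orbT.
apply: seteq_commsub; first exact: word_sub_map_inl_var normal_Nb (hE b).
exact: word_sub_leaf (gen_subgroup _).
Qed.

Lemma step_sub_stepB s : step_ok b s ->
  seteq (step_sub N (stepB a s)) (commsub A (step_sub N s)).
Proof.
move=> hs; have hM := ext_tuple_normal (oc_ext_stepB ocw_ab hs) normal_N.
apply: seteq_trans (word_sub_comm _ hM) _.
  by move=> z hza; apply/negP => /(stepB_notin_l ocw_ab hs); rewrite hza.
apply: seteq_commsub; first by apply: word_sub_map_inl_var normal_Na _ => z /= ->.
by apply: eq_word_sub => z hz; rewrite /ext_tuple (sext_stepB ocw_ab hs hz).
Qed.

Lemma step_sub_stepA s : step_ok a s ->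
  seteq (step_sub N (stepA b s)) (commsub (commsub (step_sub N s) B) B).
Proof.
move=> hs; have hM := ext_tuple_normal (oc_ext_stepA ocw_ab hs) normal_N.
have hy := fresh_notin (vars (sword s)).
apply: seteq_trans (word_sub_comm _ hM) _.
  move=> z; rewrite /= mem_cat inE => /orP [/(stepA_notin_r ocw_ab hs) //|/eqP ->].
  by rewrite vars_map inr_notin_map_inl.
apply: seteq_commsub; last by apply: word_sub_map_inl_var normal_Nb _ => z /= ->.
apply: seteq_trans (word_sub_comm _ _) _.
- by move=> z hz; rewrite inE; apply/negP => /eqP ez; move: hy; rewrite -ez hz.
- by move=> z hz; apply: hM; rewrite /= mem_cat hz.
apply: seteq_commsub.
  by apply: eq_word_sub => z hz; rewrite /ext_tuple (sext_stepA ocw_ab hs hz).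
apply: seteq_trans (word_sub_leaf (gen_subgroup _)) _.
by rewrite /ext_tuple /= vars_map (negPf (inr_notin_map_inl _ _)) eqxx.
Qed.

Lemma step_linear_stepF : step_linear N (commsub W W) (stepF a b).
Proof.
have hM := ext_tuple_normal (oc_ext_stepF ocw_ab) normal_N.
set M := ext_tuple N (sext (stepF a b)).
have hD := commsub_normal normal_W normal_W.
have hY : seteq (word_sub (Leaf (inr 0)) M) W := word_sub_leaf (gen_subgroup _).
have hYn : is_normal (word_sub (Leaf (inr 0)) M).
  by apply: word_sub_normal => z hz; apply: hM; rewrite /= !mem_cat hz !orbT.
have hBYn : is_normal (word_sub (Comm (map_word inl b) (Leaf (inr 0))) M).
  by apply: word_sub_normal => z hz; apply: hM; rewrite /= mem_cat hz orbT.
have hBY : subset_of (word_sub (Comm (map_word inl b) (Leaf (inr 0))) M) W.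
  by move=> x /word_sub_comm_sub /(commsub_subr hYn) /hY.
apply: (linear_commr (K := commsub W W) _ hD hBYn).
- by rewrite vars_map inr_notin_map_inl.
- apply: (linear_commr _ hD hYn (linear_leaf (normal_subgroup hD))).
  + by rewrite vars_map inr_notin_map_inl.
  + exact: commsub_subr hD.
  + apply: commsub_mono => x; last by move/hY.
    by move/(commsub_subr hYn)/hY.
- exact: commsub_subr hD.
- by apply: commsub_mono => // x /(commsub_subr hBYn) /hBY.
Qed.

Lemma step_linear_stepB s K E : step_ok b s -> is_normal E -> step_linear N K s ->
  subset_of (step_sub N s) B ->
  subset_of (commsub A K) E -> subset_of (commsub (commsub A B) B) E ->
  step_linear N E (stepB a s).
Proof.
move=> hs hE hlin hSB hAK hABB; have [_ _ hl] := hs.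
have hM := ext_tuple_normal (oc_ext_stepB ocw_ab hs) normal_N.
set M := ext_tuple N (sext (stepB a s)).
have hMs z : z \in vars (sword s) -> M z = ext_tuple N (sext s) z.
  by move=> hz; rewrite /M /ext_tuple (sext_stepB ocw_ab hs hz).
have hA : seteq (word_sub (map_word inl a) M) A.
  by apply: word_sub_map_inl_var normal_Na _ => z /= ->.
have hS : seteq (word_sub (sword s) M) (step_sub N s).
  by apply: eq_word_sub => z /hMs ->.
have hSn : is_normal (word_sub (sword s) M).
  by apply: word_sub_normal => z hz; apply: hM; rewrite /= mem_cat hz orbT.
apply: (linear_commr (K := K) _ hE hSn).
- exact: (stepB_notin_l ocw_ab hs hl).
- exact: linear_mod_ext (fun z hz => esym (hMs z hz)) hl hlin.
- by move=> x /(commsub_mono (seteq_sub hA) (fun y hy => hy)) /hAK.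
- have hSB' : subset_of (word_sub (sword s) M) B by move=> y /hS /hSB.
  move=> x hx; apply: hABB; move: x hx.
  exact: (commsub_mono (commsub_mono (seteq_sub hA) hSB') hSB').
Qed.

Lemma step_linear_stepA s K E : step_ok a s -> is_normal E -> step_linear N K s ->
  subset_of (step_sub N s) A -> subset_of (commsub (commsub K B) B) E ->
  subset_of (commsub (commsub W A) B) E -> subset_of (commsub W W) E ->
  step_linear N E (stepA b s).
Proof.
move=> hs hE hlin hSA hKBB hWAB hWW; have [_ _ hl] := hs.
have hM := ext_tuple_normal (oc_ext_stepA ocw_ab hs) normal_N.
set y := fresh (vars (sword s)); set M := ext_tuple N (sext (stepA b s)).
have hMs z : z \in vars (sword s) -> M z = ext_tuple N (sext s) z.
  by move=> hz; rewrite /M /ext_tuple (sext_stepA ocw_ab hs hz).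
have hS : seteq (word_sub (sword s) M) (step_sub N s) by apply: eq_word_sub => z /hMs ->.
have hY : seteq (word_sub (Leaf (inr y)) M) B.
  apply: seteq_trans (word_sub_leaf (gen_subgroup _)) _.
  by rewrite /M /ext_tuple /= vars_map (negPf (inr_notin_map_inl _ _)) eqxx.
have hB : seteq (word_sub (map_word inl b) M) B.
  by apply: word_sub_map_inl_var normal_Nb _ => z /= ->.
have hSY : subset_of (commsub (word_sub (sword s) M) (word_sub (Leaf (inr y)) M)) W.
  move=> x hx; apply: (seteq_sup W_commsub); move: x hx.
  by apply: commsub_mono => x; [move/hS/hSA | move/hY].
have hR := relcent_normal normal_B hE.
apply: (linear_comml (K := relcent B E) _ hE).
- exact: (stepA_notin_r ocw_ab hs hl).
- apply: (linear_comml (K := K) _ hR).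
  + by rewrite inE; apply/eqP => ey; have := fresh_notin (vars (sword s)); rewrite -ey hl.
  + exact: (linear_mod_ext (fun z hz => esym (hMs z hz)) hl hlin).
  + apply/(commsub_relcent _ _ hE) => x hx; apply: hKBB; move: x hx.
    by apply: commsub_mono => //; apply: commsub_mono => // u /hY.
  + apply/(commsub_relcent _ _ hE) => x hx; apply: hWAB; move: x hx.
    by apply: commsub_mono => //; apply: commsub_mono => // u /hS /hSA.
- by apply/(commsub_relcent _ _ hE) => x hx u /hB; apply: hx.
- set P := word_sub (Comm (sword s) (Leaf (inr y))) M.
  have hPW : subset_of P W by move=> x /word_sub_comm_sub /hSY.
  have hPbW : subset_of (commsub P (word_sub (map_word inl b) M)) W.
    move=> x hx; apply: (commsub_subl (Y := word_sub (map_word inl b) M) normal_W).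
    exact: (commsub_mono hPW (fun u hu => hu)).
  by move=> x hx; apply: hWW; apply: (commsub_mono hPbW hPW).
Qed.

Lemma stepA_series E sa : is_normal E -> subset_of (commsub W W) E ->
  subset_of (commsub (commsub W A) B) E -> subset_of E W ->
  extension_steps a sa -> linear_series a sa ->
  let F := series N E (map (stepA b) sa) (size sa) in
  [/\ is_normal F, subset_of F W, subset_of (commsub (commsub A B) B) F &
      linear_steps N E (map (stepA b) sa)].
Proof.
move=> hE hWWE hWABE hEW [_ _ hsa] hla F.
have [hUend hUlin] := hla G N normal_Na.
set U := series N (commsub A A) sa in hUend hUlin.
set ssA := map (stepA b) sa.
have hnth i : i < size sa -> nth step0 ssA i = stepA b (nth step0 sa i) by apply: nth_map.
have hSn i : i < size ssA -> is_normal (step_sub N (nth step0 ssA i)).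
  rewrite size_map => hi; rewrite hnth //.
  exact: step_sub_normal (oc_ext_stepA ocw_ab (hsa i hi)) normal_N.
have hVn := series_normal hE hSn.
have hSA := step_sub_word_sub normal_Na hsa hUend.
have himg : forall n, subset_of (commsub (commsub (U n) B) B) (series N E ssA n).
  apply: (@series_image _ N (fun X => commsub (commsub X B) B) _ _ sa ssA);
    [|by rewrite size_map|exact: hE|exact: hSn| |].
  - by move=> X Y Z hZ; apply: commsub2_setmull_min normal_B hZ.
  - by move=> i hi; rewrite hnth //; apply: seteq_sup (step_sub_stepA (hsa i hi)).
  - move=> x hx; apply: hWABE; move: x hx; apply: commsub_mono => // x hx.
    have := three_subgroup_AA_B normal_A normal_B hx.
    by apply: commsub_mono => // y /(seteq_sup W_commsub).
have hVW : forall n, subset_of (series N E ssA n) W.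
  apply: series_sub (normal_subgroup normal_W) hEW _ => i; rewrite size_map => hi.
  rewrite hnth // => x /(step_sub_stepA (hsa i hi)) /(commsub_mono _ (fun y hy => hy)) hx.
  apply: (commsub_subl normal_W); apply: hx => y hy; apply: (seteq_sup W_commsub).
  by move: y hy; apply: commsub_mono => // y /hSA; apply.
split; [exact: hVn | exact: hVW | |].
  move=> x hx; apply: himg; move: x hx.
  by apply: commsub_mono => //; apply: commsub_mono => // y /(seteq_sup hUend).
move=> i; rewrite size_map => hi; rewrite hnth //.
have hEV := series_mono (N := N) (D := E) (ss := ssA) (leq0n i).
apply: (step_linear_stepA (K := U i) (hsa i hi) (hVn i) (hUlin i hi) (hSA i hi) (himg i)).
  by move=> x /hWABE /hEV.
by move=> x /hWWE /hEV.
Qed.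

Lemma stepB_series E sb : is_normal E -> subset_of (commsub (commsub A B) B) E -> subset_of E W ->
  extension_steps b sb -> linear_series b sb ->
  seteq (series N E (map (stepB a) sb) (size sb)) W /\ linear_steps N E (map (stepB a) sb).
Proof.
move=> hE hABBE hEW [_ _ hsb] hlb.
have [hRend hRlin] := hlb G N normal_Nb.
set R := series N (commsub B B) sb in hRend hRlin.
set ssB := map (stepB a) sb.
have hnth i : i < size sb -> nth step0 ssB i = stepB a (nth step0 sb i) by apply: nth_map.
have hSn i : i < size ssB -> is_normal (step_sub N (nth step0 ssB i)).
  rewrite size_map => hi; rewrite hnth //.
  exact: step_sub_normal (oc_ext_stepB ocw_ab (hsb i hi)) normal_N.
have hVn := series_normal hE hSn.
have hSB := step_sub_word_sub normal_Nb hsb hRend.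
have himg : forall n, subset_of (commsub A (R n)) (series N E ssB n).
  apply: (@series_image _ N (commsub A) _ _ sb ssB);
    [|by rewrite size_map|exact: hE|exact: hSn| |].
  - by move=> X Y Z hZ; apply: commsub_setmulr_min hZ.
  - by move=> i hi; rewrite hnth //; apply: seteq_sup (step_sub_stepB (hsb i hi)).
  - by move=> x /(three_subgroup_A_BB normal_A normal_B) /hABBE.
have hVW : forall n, subset_of (series N E ssB n) W.
  apply: series_sub (normal_subgroup normal_W) hEW _ => i; rewrite size_map => hi.
  rewrite hnth // => x /(step_sub_stepB (hsb i hi)) hx; apply: (seteq_sup W_commsub).
  by move: x hx; apply: commsub_mono => // y /hSB; apply.
split.
  apply: sub_antisym (hVW _) _ => x /(seteq_sub W_commsub) hx; apply: himg; move: x hx.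
  by apply: commsub_mono => // y /(seteq_sup hRend).
move=> i; rewrite size_map => hi; rewrite hnth //.
have hEV := series_mono (N := N) (D := E) (ss := ssB) (leq0n i).
apply: (step_linear_stepB (K := R i) (hsb i hi) (hVn i) (hRlin i hi) (hSB i hi) (himg i)).
by move=> x /hABBE /hEV.
Qed.

End CommutatorSeries.

Lemma step_sub_stepL (G : group) (N : nat -> gset G) x b : is_ocw (Comm (Leaf x) b) ->
  (forall j, j \in vars (Comm (Leaf x) b) -> is_normal (N j)) ->
  seteq (step_sub N (stepL x b)) (commsub (word_sub (Comm (Leaf x) b) N) (word_sub b N)).
Proof.
move=> ho hN; have hM := ext_tuple_normal (oc_ext_stepL ho) hN.
apply: seteq_trans (word_sub_comm _ hM) _.
  move=> z; rewrite inE => /eqP ->; rewrite vars_map mem_map_inl.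
  by apply/negP => /(vars_disj ho); rewrite inE eqxx.
apply: seteq_commsub.
  apply: seteq_trans (word_sub_leaf (gen_subgroup _)) _.
  by rewrite /ext_tuple /= eqxx.
apply: word_sub_map_inl_var (normal_Nb hN) _ => z hz /=.
case: eqP => // ez; move: hz; rewrite ez vars_map mem_map_inl => /(vars_disj ho).
by rewrite inE eqxx.
Qed.

Lemma step_linear_stepL (G : group) (N : nat -> gset G) x b : is_ocw (Comm (Leaf x) b) ->
  (forall j, j \in vars (Comm (Leaf x) b) -> is_normal (N j)) ->
  let W := word_sub (Comm (Leaf x) b) N in step_linear N (commsub W W) (stepL x b).
Proof.
move=> ho hN W; have hM := ext_tuple_normal (oc_ext_stepL ho) hN.
set M := ext_tuple N (sext (stepL x b)).
have hW := normal_W hN; have hD := commsub_normal hW hW.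
have hX : seteq (word_sub (Leaf (inl x)) M) W.
  apply: seteq_trans (word_sub_leaf (gen_subgroup _)) _.
  by rewrite /M /ext_tuple /= eqxx.
have hXn : is_normal (word_sub (Leaf (inl x)) M).
  by apply: word_sub_normal => z; rewrite inE => /eqP ->; apply: hM; rewrite /= inE eqxx.
apply: (linear_comml (K := commsub W W) _ hD (linear_leaf (normal_subgroup hD))).
- rewrite vars_map mem_map_inl; apply/negP => /(vars_disj ho).
  by rewrite inE eqxx.
- exact: commsub_subl hD.
- have hXW : subset_of (word_sub (Leaf (inl x)) M) W by move=> y /hX.
  have hXbW : subset_of (commsub (word_sub (Leaf (inl x)) M) (word_sub (map_word inl b) M)) W.
    by move=> y /(commsub_subl hXn) /hX.
  by move=> y hy; apply: (commsub_mono hXbW hXW).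
Qed.

Lemma series_boundS m : 0 < m -> series_bound m.+1 = (series_bound m).*2.+1.
Proof. by case: m => // m _; rewrite /series_bound /= !expnS -addnn; have := expn_gt0 2 m; lia. Qed.

Lemma series_bound_mono m n : m <= n -> series_bound m <= series_bound n.
Proof.
move=> /subnK <-; elim: (n - m) => [|k ih] //=; apply: leq_trans ih _.
by rewrite addSn; case: (posnP (k + m)) => [-> //|hkm]; rewrite series_boundS // -addnn; lia.
Qed.

Lemma extension_steps_leaf j : extension_steps (Leaf j) [:: leaf_step j].
Proof.
split=> // [[|//]] _; split; [by exists 0; first exact: ext_word0 | | by rewrite inE].
by move=> z; rewrite inE => /eqP ->; apply: var_comp_for; rewrite inE.
Qed.

Lemma linear_series_leaf j : linear_series (Leaf j) [:: leaf_step j].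
Proof.
move=> G N hN W; have hW : is_normal W by apply: word_sub_normal.
have hS : seteq (step_sub N (leaf_step j)) W := word_sub_leaf (gen_subgroup _).
split.
  apply: sub_antisym; first exact: setmul_min (normal_subgroup hW) (seteq_sub hS) (commsub_subl hW).
  by move=> x /hS; apply: setmul_subl; apply: commsub_subgroup.
by move=> [|//] _; apply: linear_leaf; apply: commsub_subgroup.
Qed.

Lemma extension_steps_leafl x b sb : is_ocw (Comm (Leaf x) b) -> extension_steps b sb ->
  extension_steps (Comm (Leaf x) b) (stepL x b :: map (stepB (Leaf x)) sb).
Proof.
move=> ho [_ htb hsb]; split=> //.
  rewrite /= size_map max0n; case: (posnP (height b)) htb => [-> //|hb].
  by rewrite series_boundS // -addnn; lia.
apply: steps_ok_cons (step_ok_stepL ho) (steps_ok_map (step_ok_stepB ho) hsb).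
Qed.

Lemma linear_series_leafl x b sb : is_ocw (Comm (Leaf x) b) ->
  extension_steps b sb -> linear_series b sb ->
  linear_series (Comm (Leaf x) b) (stepL x b :: map (stepB (Leaf x)) sb).
Proof.
move=> ho hsb hlb G N hN W.
have hW := normal_W hN; have hD := commsub_normal hW hW.
have hL := step_sub_stepL ho hN.
have hV1 : is_normal (setmul (step_sub N (stepL x b)) (commsub W W)).
  exact: setmul_normal (step_sub_normal (oc_ext_stepL ho) hN) hD.
have hV1W : subset_of (setmul (step_sub N (stepL x b)) (commsub W W)) W.
  apply: setmul_min (normal_subgroup hW) _ (commsub_subl hW).
  by move=> y /hL /(commsub_subl hW).
have hABB : subset_of (commsub (commsub (word_sub (Leaf x) N) (word_sub b N)) (word_sub b N))
                      (setmul (step_sub N (stepL x b)) (commsub W W)).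
  move=> y hy; apply: setmul_subl; first exact: commsub_subgroup.
  by apply: (seteq_sup hL); move: y hy; apply: commsub_mono => // y /(seteq_sup (W_commsub ho hN)).
have [hend hlin] := stepB_series ho hN hV1 hABB hV1W hsb hlb.
split; first by rewrite /= size_map.
exact: linear_steps_cons (step_linear_stepL ho hN) hlin.
Qed.

Lemma extension_steps_comm a b sa sb : is_ocw (Comm a b) -> 0 < height a ->
  extension_steps a sa -> extension_steps b sb ->
  extension_steps (Comm a b) (stepF a b :: map (stepA b) sa ++ map (stepB a) sb).
Proof.
move=> ho ha [_ hta hsa] [_ htb hsb]; split=> //.
  rewrite /= size_cat !size_map series_boundS -?addnn; last exact: leq_trans ha (leq_maxl _ _).
  rewrite ltnS; apply: leq_add.
    exact: leq_trans hta (series_bound_mono (leq_maxl _ _)).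
  exact: leq_trans htb (series_bound_mono (leq_maxr _ _)).
apply: steps_ok_cons (step_ok_stepF ho ha) (steps_ok_cat _ _).
  exact: steps_ok_map (step_ok_stepA ho ha) hsa.
exact: steps_ok_map (step_ok_stepB ho) hsb.
Qed.

Lemma linear_series_comm a b sa sb : is_ocw (Comm a b) ->
  extension_steps a sa -> linear_series a sa -> extension_steps b sb -> linear_series b sb ->
  linear_series (Comm a b) (stepF a b :: map (stepA b) sa ++ map (stepB a) sb).
Proof.
move=> ho hsa hla hsb hlb G N hN W.
have hW := normal_W hN; have hD := commsub_normal hW hW.
have hF := step_sub_stepF ho hN.
set V1 := setmul (step_sub N (stepF a b)) (commsub W W).
have hV1 : is_normal V1 := setmul_normal (step_sub_normal (oc_ext_stepF ho) hN) hD.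
have hDV1 : subset_of (commsub W W) V1 by apply: setmul_subr; apply: gen_subgroup.
have hV1W : subset_of V1 W.
  apply: setmul_min (normal_subgroup hW) _ (commsub_subl hW).
  by move=> y /hF /(commsub_subr (commsub_normal (normal_B hN) hW)) /(commsub_subr hW).
have hWAB : subset_of (commsub (commsub W (word_sub a N)) (word_sub b N)) V1.
  have hFV1 : subset_of (commsub (word_sub a N) (commsub (word_sub b N) W)) V1.
    by move=> z /(seteq_sup hF); apply: setmul_subl; apply: commsub_subgroup.
  move=> y /(three_subgroup_WA_B (normal_A hN) (normal_B hN) hW (W_commsub ho hN)).
  exact: (setmul_min (normal_subgroup hV1) hFV1 hDV1).
have [hFn hFW hFABB hlinA] := stepA_series ho hN hV1 hDV1 hWAB hV1W hsa hla.
have [hend hlinB] := stepB_series ho hN hFn hFABB hFW hsb hlb.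
split; first by rewrite /= size_cat series_cat !size_map.
apply: linear_steps_cons (step_linear_stepF ho hN) (linear_steps_cat hlinA _).
by rewrite size_map.
Qed.

Fixpoint steps_of (w : word nat) : seq step :=
  match w with
  | Leaf j => [:: leaf_step j]
  | Comm (Leaf x) b => stepL x b :: map (stepB (Leaf x)) (steps_of b)
  | Comm a b => stepF a b :: map (stepA b) (steps_of a) ++ map (stepB a) (steps_of b)
  end.

Lemma steps_ofP w : is_ocw w -> extension_steps w (steps_of w) /\ linear_series w (steps_of w).
Proof.
elim: w => [j|a iha b ihb] ho.
  by split; [apply: extension_steps_leaf | apply: linear_series_leaf].
have [hsb hlb] := ihb (is_ocw_r ho).
case: a ho iha => [x|a1 a2] ho iha.
  by split; [apply: extension_steps_leafl | apply: linear_series_leafl].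
have [hsa hla] := iha (is_ocw_l ho).
by split; [apply: extension_steps_comm | apply: linear_series_comm].
Qed.

Lemma oc_ext_valid_for w r v E : (forall j, (j \in vars w) = (j < r)) ->
  oc_ext_for w v E -> oc_ext_valid r v E.
Proof.
move=> vars_w hE z hz; have [hc hcw hcz] := hE z hz.
by split=> //; split=> // k /hcw; rewrite vars_w.
Qed.

Theorem theorem1p1 (w : word nat) (r : nat) :
  is_ocw w -> perm_eq (vars w) (iota 0 r) ->
  exists (t : nat) (st : nat -> step),
    (if height w == 0 then t = 1 else t <= 2 ^ height w + 2 ^ (height w).-1 - 1) /\
    (forall i, 1 <= i <= t ->
       (exists d, ext_word w (sword (st i)) d /\
                  (if height w == 0 then d = 0 else d <= (height w).-1)) /\
       oc_ext_valid r (sword (st i)) (sext (st i)) /\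
       slin (st i) \in vars (sword (st i))) /\
    forall (G : group) (N : nat -> gset G),
      (forall j, j < r -> is_normal (N j)) ->
      let W := word_sub w N in
      exists V : nat -> gset G,
        seteq (V 0) (commsub W W) /\ seteq (V t) W /\
        forall i, 1 <= i <= t ->
          let M := ext_tuple N (sext (st i)) in
          [/\ is_normal (V i), subset_of (V i.-1) (V i),
              seteq (V i) (setmul (word_sub (sword (st i)) M) (V i.-1)) &
              linear_mod (V i.-1) (sword (st i)) M (slin (st i))].
Proof.
move=> ho hperm; have vars_w j : (j \in vars w) = (j < r) by rewrite (perm_mem hperm) mem_iota.
have [[ht0 htb hss] hlin] := steps_ofP ho.
set ss := steps_of w in ht0 htb hss hlin.
exists (size ss), (fun i => nth step0 ss i.-1); split.
  by move: htb; rewrite /series_bound; case: eqP => // _ ht1; apply/eqP; rewrite eqn_leq ht1.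
split=> [i /andP [hi1 hit]|G N hN W].
  have hi : i.-1 < size ss by rewrite prednK.
  have [[d hd hdh] hext hl] := hss _ hi.
  split; first by exists d; split=> //; case: eqP hdh => // ->; rewrite leqn0 => /eqP.
  by split=> //; apply: oc_ext_valid_for vars_w hext.
have hNw j : j \in vars w -> is_normal (N j) by rewrite vars_w; apply: hN.
have [hend hlinW] := hlin G N hNw.
have hW : is_normal W by apply: word_sub_normal.
have hss_normal := steps_ok_series_normal (commsub_normal hW hW) hNw hss.
exists (series N (commsub W W) ss); split=> //; split=> // [[|i]] // /andP [_ hi] M.
split; [exact: hss_normal | exact: (series_mono (leqnSn i)) | by rewrite seriesS | exact: hlinW].
Qed.
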